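(* Let $k\geq 2$, $d\geq 2$, let $v_1,\dots,v_k\in\mathbb{R}^d$ be nonzero vectors and $\gamma_1,\dots,\gamma_k>0$ with $\sum_{i=1}^k\gamma_i v_i=0$. Then there exists a bi-partitioning $c_1\dot\cup c_2=\{1,\dots,k\}$ into nonempty sets such that $$\max_{i\in c_1,j\in c_2}\alpha(v_i,v_j)\leq\cos\Big(\frac{\pi}{k-1}\Big).$$
   Context: For nonzero $a,b\in\mathbb{R}^d$, the cosine similarity is $\alpha(a,b)=\frac{\langle a,b\rangle}{\|a\|\|b\|}$. *)

From mathcomp Require Import all_boot all_order all_algebra.
From mathcomp Require Import all_classical all_reals all_analysis.
Set Implicit Arguments. Unset Strict Implicit. Unset Printing Implicit Defensive.
Import Order.TTheory GRing.Theory Num.Theory.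
Local Open Scope ring_scope.

Definition dotv (R : realType) (d : nat) (a b : 'rV[R]_d) : R :=
  \sum_(l < d) a ord0 l * b ord0 l.
Definition normv (R : realType) (d : nat) (a : 'rV[R]_d) : R :=
  Num.sqrt (dotv a a).
Definition cos_sim (R : realType) (d : nat) (a b : 'rV[R]_d) : R :=
  dotv a b / (normv a * normv b).

From mathcomp Require Import all_boot all_order all_algebra.
From mathcomp Require Import all_classical all_reals all_analysis.
From mathcomp Require Import ring lra zify.

(* Normalise the v_i to unit vectors u_i and suppose every bipartition has a
   cross pair at angle less than th = pi / (k - 1).  Starting from a single
   point, keep adding a point at angle < th from the points already collected:
   a spherical cap containing the collected points can be enlarged to contain
   the new point while its radius grows by less than th / 2 (move the centre
   along the great circle towards the new point).  After k - 1 steps all u_i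
   lie in a cap of radius < (k - 1) th / 2 = pi / 2, i.e. in an open
   hemisphere <c, x> > 0, which contradicts sum_i gamma_i v_i = 0. *)

Set Implicit Arguments.
Unset Strict Implicit.
Unset Printing Implicit Defensive.

Import Order.TTheory GRing.Theory Num.Theory.
Local Open Scope ring_scope.

Section DotProduct.
Variables (R : realType) (d : nat).
Implicit Types a b c : 'rV[R]_d.

Lemma dotvC a b : dotv a b = dotv b a.
Proof. by apply: eq_bigr => l _; rewrite mulrC. Qed.

Lemma dotvDr a b c : dotv a (b + c) = dotv a b + dotv a c.
Proof. by rewrite /dotv -big_split; apply: eq_bigr => l _; rewrite mxE mulrDr. Qed.

Lemma dotvDl a b c : dotv (a + b) c = dotv a c + dotv b c.
Proof. by rewrite dotvC dotvDr !(dotvC c). Qed.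

Lemma dotvZr (x : R) a b : dotv a (x *: b) = x * dotv a b.
Proof. by rewrite /dotv mulr_sumr; apply: eq_bigr => l _; rewrite mxE mulrCA. Qed.

Lemma dotvZl (x : R) a b : dotv (x *: a) b = x * dotv a b.
Proof. by rewrite dotvC dotvZr dotvC. Qed.

Lemma dotvBr a b c : dotv a (b - c) = dotv a b - dotv a c.
Proof. by rewrite dotvDr -scaleN1r dotvZr mulN1r. Qed.

Lemma dotvBl a b c : dotv (a - b) c = dotv a c - dotv b c.
Proof. by rewrite dotvC dotvBr !(dotvC c). Qed.

Lemma dotv0r a : dotv a 0 = 0.
Proof. by rewrite /dotv big1 // => l _; rewrite mxE mulr0. Qed.

Lemma dotv0l a : dotv 0 a = 0.
Proof. by rewrite dotvC dotv0r. Qed.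

Lemma dotv_sumr (I : finType) a (F : I -> 'rV[R]_d) :
  dotv a (\sum_i F i) = \sum_i dotv a (F i).
Proof. exact: (big_morph _ (dotvDr a) (dotv0r a)). Qed.

Lemma dotv_ge0 a : 0 <= dotv a a.
Proof. by apply: sumr_ge0 => l _; rewrite -expr2 sqr_ge0. Qed.

Lemma dotv_gt0 a : a != 0 -> 0 < dotv a a.
Proof.
apply: contraNT; rewrite -leNgt => aa_le0; apply/eqP/matrixP => i l.
have aa0 : dotv a a = 0 by apply/eqP; rewrite eq_le aa_le0 dotv_ge0.
have sq_ge0 (m : 'I_d) : predT m -> 0 <= a ord0 m * a ord0 m.
  by move=> _; rewrite -expr2 sqr_ge0.
have /eqP := psumr_eq0P sq_ge0 aa0 (i := l) isT.
by rewrite mulf_eq0 orbb (ord1 i) !mxE => /eqP.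
Qed.

Lemma dotv_CauchySchwarz a b : dotv a b ^+ 2 <= dotv a a * dotv b b.
Proof.
have [->|a0] := eqVneq a 0; first by rewrite !dotv0l expr0n mul0r.
have := dotv_ge0 (dotv a a *: b - dotv a b *: a).
rewrite !dotvBl !dotvBr !dotvZl !dotvZr (dotvC b a).
have -> : dotv a a * (dotv a a * dotv b b) - dotv a a * (dotv a b * dotv a b) -
    (dotv a b * (dotv a a * dotv a b) - dotv a b * (dotv a b * dotv a a)) =
    dotv a a * (dotv a a * dotv b b - dotv a b ^+ 2) by ring.
by rewrite pmulr_rge0 ?dotv_gt0 // subr_ge0.
Qed.

Lemma dotv_unit_bound a b :
  dotv a a = 1 -> dotv b b = 1 -> -1 <= dotv a b <= 1.
Proof.
move=> a1 b1; have := dotv_CauchySchwarz a b; rewrite a1 b1 mulr1 => ab2.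
by apply/andP; split; nra.
Qed.

Definition unitv a := (normv a)^-1 *: a.

Lemma normv_gt0 a : a != 0 -> 0 < normv a.
Proof. by move=> a0; rewrite sqrtr_gt0 dotv_gt0. Qed.

Lemma dotv_unitv a : a != 0 -> dotv (unitv a) (unitv a) = 1.
Proof.
move=> a0; rewrite dotvZl dotvZr -[dotv a a]sqr_sqrtr ?dotv_ge0 //.
by have /gt_eqF/negbT := normv_gt0 a0; rewrite /normv => n0; field.
Qed.

Lemma cos_simE a b :
  a != 0 -> b != 0 -> cos_sim a b = dotv (unitv a) (unitv b).
Proof.
move=> /normv_gt0/gt_eqF/negbT a0 /normv_gt0/gt_eqF/negbT b0.
by rewrite /cos_sim dotvZl dotvZr; field; rewrite a0 b0.
Qed.

Lemma dotv_psum_gt0 (I : finType) (i0 : I) c (gamma : I -> R)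
    (v : I -> 'rV[R]_d) :
  (forall i, 0 < gamma i) -> (forall i, 0 < dotv c (v i)) ->
  0 < dotv c (\sum_i gamma i *: v i).
Proof.
move=> gamma_gt0 cv_gt0; rewrite dotv_sumr (bigD1 i0) //=.
rewrite ltr_wpDr ?dotvZr ?mulr_gt0 //.
by apply: sumr_ge0 => i _; rewrite dotvZr ltW ?mulr_gt0.
Qed.

End DotProduct.

Lemma ler_cos (R : realType) : {in `[0, pi] &, {mono (@cos R) : x y /~ y <= x}}.
Proof. by move=> x y x0pi y0pi; rewrite leNgt ltr_cos // -leNgt. Qed.

Section Angle.
Variables (R : realType) (d : nat).
Implicit Types a b c w x y z : 'rV[R]_d.

Definition angle a b := acos (dotv a b).

Section UnitVectors.
Variables a b : 'rV[R]_d.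
Hypotheses (a1 : dotv a a = 1) (b1 : dotv b b = 1).

Lemma cos_angle : cos (angle a b) = dotv a b.
Proof. by rewrite acosK // in_itv /= dotv_unit_bound. Qed.

Lemma angle_ge0 : 0 <= angle a b.
Proof. by rewrite acos_ge0 // dotv_unit_bound. Qed.

Lemma angle_lepi : angle a b <= pi.
Proof. by rewrite acos_lepi // dotv_unit_bound. Qed.

Lemma angle_itv : angle a b \in `[0, pi].
Proof. by rewrite in_itv /= angle_ge0 angle_lepi. Qed.

Lemma sin_angle_ge0 : 0 <= sin (angle a b).
Proof. by rewrite sin_ge0_pi // angle_ge0 angle_lepi. Qed.

Lemma sin_angle_sqr : sin (angle a b) ^+ 2 = 1 - dotv a b ^+ 2.
Proof. by rewrite sin2cos2 cos_angle. Qed.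

End UnitVectors.

Lemma angle_cosK a b t :
  t \in `[0, pi] -> dotv a b = cos t -> angle a b = t.
Proof. by move=> t0pi ab; rewrite /angle ab cosK. Qed.

Lemma cos_angleD_le x y z :
  dotv x x = 1 -> dotv y y = 1 -> dotv z z = 1 ->
  cos (angle x y + angle y z) <= dotv x z.
Proof.
move=> x1 y1 z1; rewrite cosD !cos_angle //.
(* Cauchy-Schwarz for the components of x and z orthogonal to y. *)
have := dotv_CauchySchwarz (x - dotv x y *: y) (z - dotv y z *: y).
rewrite !dotvBl !dotvBr !dotvZl !dotvZr (dotvC y x) (dotvC z y) x1 y1 z1.
have := sin_angle_sqr x1 y1; have := sin_angle_sqr y1 z1.
have := sin_angle_ge0 x1 y1; have := sin_angle_ge0 y1 z1.
set sa := sin (angle x y); set sb := sin (angle y z).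
set p := dotv x y; set q := dotv y z; set r := dotv x z.
move=> sb0 sa0 sb2 sa2.
have -> : (1 - p * p - (p * p - p * (p * 1))) * (1 - q * q - (q * q - q * (q * 1)))
  = (sa * sb) ^+ 2 by rewrite exprMn sa2 sb2; ring.
have -> : r - q * p - (p * q - p * (q * 1)) = r - p * q by ring.
have sab0 : 0 <= sa * sb by rewrite mulr_ge0.
move: (sa * sb) sab0 => s s0 hs; nra.
Qed.

Lemma angle_triangle x y z :
  dotv x x = 1 -> dotv y y = 1 -> dotv z z = 1 ->
  angle x z <= angle x y + angle y z.
Proof.
move=> x1 y1 z1.
have [sum_le|sum_gt] := lerP (angle x y + angle y z) pi; last first.
  exact: le_trans (angle_lepi x1 z1) (ltW sum_gt).
rewrite -ler_cos ?angle_itv // ?cos_angle ?cos_angleD_le //.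
by rewrite in_itv /= sum_le addr_ge0 ?angle_ge0.
Qed.

Lemma angle_lt_pihalf_dotv_gt0 a b :
  dotv a a = 1 -> dotv b b = 1 -> angle a b < pi / 2 -> 0 < dotv a b.
Proof.
move=> a1 b1 ab_lt; rewrite -cos_angle //; apply: cos_gt0_pihalf.
rewrite ab_lt andbT (lt_le_trans _ (angle_ge0 a1 b1)) // oppr_lt0.
by rewrite divr_gt0 ?pi_gt0.
Qed.

Lemma angle_self a : dotv a a = 1 -> angle a a = 0.
Proof. by move=> a1; rewrite /angle a1 acos1. Qed.

Lemma angle_geodesic c y t :
  dotv c c = 1 -> dotv y y = 1 -> 0 < angle c y < pi -> 0 <= t <= angle c y ->
  exists c', [/\ dotv c' c' = 1, angle c' c = t & angle c' y = angle c y - t].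
Proof.
move=> c1 y1 /andP[phi_gt0 phi_ltpi] /andP[t_ge0 t_le].
have cy := cos_angle c1 y1; set phi := angle c y in cy phi_gt0 phi_ltpi t_le *.
have /lt0r_neq0 s0 : 0 < sin phi by rewrite sin_gt0_pi // phi_gt0.
pose c' := (sin phi)^-1 *: (sin (phi - t) *: c + sin t *: y).
have c'c : dotv c' c = cos t.
  by rewrite dotvZl dotvDl !dotvZl c1 (dotvC y c) -cy sinB; field.
have c'y : dotv c' y = cos (phi - t).
  rewrite dotvZl dotvDl !dotvZl y1 -cy sinB cosB.
  apply: (mulfI s0); rewrite mulrA mulfV // mul1r.
  by rewrite -(cos2Dsin2 phi); ring.
exists c'; split.
- rewrite {2}/c' dotvZr dotvDr !dotvZr c'c c'y.
  apply: (mulfI s0); rewrite mulrA mulfV // mul1r mulr1.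
  by rewrite [sin t * _]mulrC -sinD subrK.
- by apply: angle_cosK c'c; rewrite in_itv /= t_ge0 (le_trans t_le) ?ltW.
- apply: angle_cosK c'y; rewrite in_itv /= subr_ge0 t_le /=.
  by rewrite lerBlDr (le_trans (ltW phi_ltpi)) // lerDl.
Qed.

Lemma cap_extend c w y r :
  dotv c c = 1 -> dotv w w = 1 -> dotv y y = 1 ->
  angle c w <= r -> r + angle w y < pi ->
  exists c' r', [/\ dotv c' c' = 1, r' *+ 2 <= r *+ 2 + angle w y,
    angle c' y <= r' &
    forall z, dotv z z = 1 -> angle c z <= r -> angle c' z <= r'].
Proof.
move=> c1 w1 y1 cw_le r_lt.
have e0 := angle_ge0 w1 y1; have r0 := le_trans (angle_ge0 c1 w1) cw_le.
have phi_le : angle c y <= r + angle w y.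
  by rewrite (le_trans (angle_triangle c1 w1 y1)) // lerD2r.
have [phi_le_r|r_lt_phi] := lerP (angle c y) r.
  by exists c, r; split; rewrite // mulr2n; lra.
(* Move the centre towards y by half the excess angle c y - r. *)
have phi_itv : 0 < angle c y < pi by apply/andP; split; lra.
have t_itv : 0 <= (angle c y - r) / 2 <= angle c y by apply/andP; split; lra.
have [c' [c'1 c'c c'y]] := angle_geodesic c1 y1 phi_itv t_itv.
exists c', ((angle c y + r) / 2); split => //.
- have -> : (angle c y + r) / 2 *+ 2 = angle c y + r by rewrite mulr2n; field.
  by rewrite mulr2n; lra.
- by rewrite c'y; lra.
- move=> z z1 cz_le; rewrite (le_trans (angle_triangle c'1 c1 z1)) // c'c; lra.
Qed.

Lemma cos_sim_gt_cos a b t : a != 0 -> b != 0 -> t \in `[0, pi] ->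
  (cos t < cos_sim a b) = (angle (unitv a) (unitv b) < t).
Proof.
move=> a0 b0 t_itv; have a1 := dotv_unitv a0; have b1 := dotv_unitv b0.
by rewrite cos_simE // -cos_angle // ltr_cos ?angle_itv.
Qed.

End Angle.

Section CapCover.
Variables (R : realType) (d k : nat) (u : 'I_k -> 'rV[R]_d) (th : R).
Hypotheses (u1 : forall i, dotv (u i) (u i) = 1) (th_ge0 : 0 <= th)
  (th_le : k.-1%:R * th <= pi).
Hypothesis connected : forall S : {set 'I_k}, S != finset.set0 -> ~: S != finset.set0 ->
  exists i j, [/\ i \in S, j \notin S & angle (u i) (u j) < th].

Lemma cap_grow (S : {set 'I_k}) c r :
  dotv c c = 1 -> (forall i, i \in S -> angle c (u i) <= r) ->
  S != finset.set0 -> ~: S != finset.set0 -> r + th <= pi ->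
  exists j c' r', [/\ j \notin S, dotv c' c' = 1, r' *+ 2 < r *+ 2 + th &
    forall i, i \in j |: S -> angle c' (u i) <= r'].
Proof.
move=> c1 cS S0 Sc0 r_th.
have [i [j [iS jS ij_lt]]] := connected S0 Sc0.
have r_ij : r + angle (u i) (u j) < pi by lra.
have [c' [r' [c'1 r'_le c'j c'S]]] := cap_extend c1 (u1 i) (u1 j) (cS i iS) r_ij.
exists j, c', r'; split => //; first lra.
by move=> x /setU1P [-> // | xS]; apply: c'S (u1 x) (cS x xS).
Qed.

Lemma cap_cover : (1 < k)%N ->
  exists c r, [/\ dotv c c = 1, r *+ 2 < k.-1%:R * th &
    forall i, angle c (u i) <= r].
Proof.
move=> k_gt1.
have proper (S : {set 'I_k}) : (#|S| < k)%N -> ~: S != finset.set0.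
  by rewrite -card_gt0; have := cardsC S; rewrite card_ord; lia.
have grow n : (n.+1 < k)%N -> exists (S : {set 'I_k}) c r,
    [/\ #|S| = n.+2, dotv c c = 1, r *+ 2 < n.+1%:R * th &
     forall i, i \in S -> angle c (u i) <= r].
  elim: n => [|n IHn] n_lt.
    pose i0 := Ordinal (ltnW k_gt1).
    have i0S i : i \in [set i0] -> angle (u i0) (u i) <= 0.
      by move=> /set1P ->; rewrite angle_self.
    have th_pi : 0 + th <= pi.
      rewrite add0r (le_trans _ th_le) // ler_peMl // ler1n; lia.
    have [||j [c [r [jS c1 r_lt cS]]]] := cap_grow (u1 i0) i0S _ _ th_pi.
    - by rewrite -card_gt0 cards1.
    - by apply: proper; rewrite cards1.
    exists (j |: [set i0]), c, r; split => //; first by rewrite cardsU1 jS cards1.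
    by move: r_lt; rewrite mul0rn add0r mul1r.
  have [S [c [r [cS c1 r_lt Sc]]]] := IHn (ltnW n_lt).
  have S0 : S != finset.set0 by rewrite -card_gt0 cS.
  have r_th : r + th <= pi.
    have : n.+3%:R * th <= k.-1%:R * 2 * th.
      by rewrite ler_wpM2r // -natrM ler_nat -subn1; lia.
    move: r_lt th_le; rewrite -!natr1 mulr2n; lra.
  have Sc0 : ~: S != finset.set0 by apply: proper; rewrite cS.
  have [j [c' [r' [jS c'1 r'_lt c'S]]]] := cap_grow c1 Sc S0 Sc0 r_th.
  exists (j |: S), c', r'; split => //; first by rewrite cardsU1 jS cS.
  by rewrite -[n.+2]addn1 natrD mulrDl mul1r; lra.
have [S [c [r [cS c1 r_lt Sc]]]] := grow k.-2 ltac:(lia).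
have S_full : S = [set: 'I_k]%SET.
  by apply/eqP; rewrite eqEcard finset.subsetT cardsT card_ord cS /=; lia.
exists c, r; split => // [|i].
- by have -> : k.-1 = k.-2.+1 by lia.
- by apply: Sc; rewrite S_full inE.
Qed.

End CapCover.

Theorem lemma3 (R : realType) (k d : nat) (v : 'I_k -> 'rV[R]_d)
    (gamma : 'I_k -> R) :
  (2 <= k)%N -> (2 <= d)%N ->
  (forall i, v i != 0) ->
  (forall i, 0 < gamma i) ->
  \sum_(i < k) gamma i *: v i = 0 ->
  exists c1 : {set 'I_k},
    [/\ c1 != finset.set0, ~: c1 != finset.set0 &
        forall i j, i \in c1 -> j \in ~: c1 ->
          cos_sim (v i) (v j) <= cos (pi / (k%:R - 1))].
Proof.
move=> k_gt1 _ v_neq0 gamma_gt0 sum_eq0.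
pose u i := unitv (v i).
have u1 i : dotv (u i) (u i) = 1 by apply: dotv_unitv.
set th := pi / (k%:R - 1).
have k1E : k%:R - 1 = k.-1%:R :> R by rewrite -subn1 natrB // ltnW.
have th_k : k.-1%:R * th = pi.
  by rewrite /th k1E mulrC divfK // pnatr_eq0 -lt0n; lia.
have th_ge0 : 0 <= th by rewrite /th k1E divr_ge0 ?pi_ge0.
have th_itv : th \in `[0, pi].
  by rewrite in_itv /= th_ge0 -th_k ler_peMl // ler1n; lia.
apply: contrapT => no_cut.
have connected (S : {set 'I_k}) : S != finset.set0 -> ~: S != finset.set0 ->
    exists i j, [/\ i \in S, j \notin S & angle (u i) (u j) < th].
  move=> S0 Sc0; apply: contrapT => no_edge; apply: no_cut; exists S.
  split => // i j iS; rewrite inE => jS; rewrite leNgt cos_sim_gt_cos //.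
  by apply/negP => ij_lt; apply: no_edge; exists i, j.
have th_le : k.-1%:R * th <= pi by rewrite th_k.
have [c [r [c1 r_lt cu_le]]] := cap_cover u1 th_ge0 th_le connected k_gt1.
have cv_gt0 i : 0 < dotv c (v i).
  have : 0 < dotv c (u i).
    apply: angle_lt_pihalf_dotv_gt0 (u1 i) _ => //.
    by move: r_lt (cu_le i); rewrite th_k mulr2n; lra.
  by rewrite dotvZr pmulr_rgt0 // invr_gt0 normv_gt0.
have := dotv_psum_gt0 (Ordinal (ltnW k_gt1)) gamma_gt0 cv_gt0.
by rewrite sum_eq0 dotv0r ltxx.
Qed.
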